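(* Let $r_I>r_0>0$, $v_1,v_2>0$, $w_V>0$ and $w_I$ be real numbers with $\frac{r_0 w_V v_2}{r_I(v_1+v_2)}<w_I<\frac{w_V v_2}{v_1+v_2}$. Let $n\ge 1$ be an integer and $l_1,\dots,l_{n-1}\ge 0$ be real numbers. Consider the optimization problem (P) described in the context. Then the optimal value of (P) satisfies $$\left(\sum_{i=1}^{n}Y_i\right)^*\ge \sum_{i=1}^{n-1}\min\left\{\frac{l_i}{v_2}w_I,\frac{2r_0}{v_1+v_2}w_V\right\}+\frac{2r_0}{v_1+v_2}w_V .$$ Moreover, this lower bound is attained by the feasible point $$D_i^*=\frac{\min\{l_i,2r_I\}}{v_2}w_I,\quad Y_i^*=\min\left\{\frac{l_i w_I}{v_2},\frac{2r_0 w_V}{v_1+v_2}\right\}\ (i=1,\dots,n-1),\qquad D_n^*=\frac{2r_I}{v_2}w_I,\quad Y_n^*=\frac{2r_0}{v_1+v_2}w_V .$$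
   Context: Model: a vehicle of interest (VoI) moving at speed $v_1$ receives data from $n$ ''helper'' vehicles moving in the opposite direction at speed $v_2$; consecutive helpers are at distances $l_1,\dots,l_{n-1}$; helpers download from an infrastructure point of radio range $r_I$ at rate $w_I$, and deliver to the VoI over vehicle links of range $r_0$ at rate $w_V$. $D_i$ is the amount of data helper $i$ receives from the infrastructure and $Y_i$ the amount it delivers to the VoI. The optimization problem (P), over real variables $D_1,\dots,D_n,Y_1,\dots,Y_n$, is: maximize $\sum_{i=1}^n Y_i$ subject to (i) $0\le D_i\le \frac{2r_I}{v_2}w_I$ for $i=1,\dots,n$; (ii) $\sum_{i=k_1}^{k_2}D_i\le \frac{\sum_{i=k_1}^{k_2-1}\min\{l_i,2r_I\}+2r_I}{v_2}w_I$ for all $1\le k_1\le k_2\le n$; (iii) $0\le Y_i\le \frac{2r_0}{v_1+v_2}w_V$ for $i=1,\dots,n$; (iv) $Y_i\le D_i$ for $i=1,\dots,n$; (v) $\sum_{i=k_1}^{k_2}Y_i\le \frac{\sum_{i=k_1}^{k_2-1}\min\{l_i,2r_0\}+2r_0}{v_1+v_2}w_V$ for all $1\le k_1\le k_2\le n$. (Empty sums are zero.) *)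

From mathcomp Require Import all_boot all_order all_algebra.
Set Implicit Arguments. Unset Strict Implicit. Unset Printing Implicit Defensive.
Import Order.TTheory GRing.Theory Num.Theory.
Local Open Scope ring_scope.

(* Indices are 1-based as in the paper: helper i for 1 <= i <= n,
   distances l i for 1 <= i <= n-1.  D, Y, l are functions nat -> R; their
   values outside the relevant index ranges play no role. *)

Definition feasible (R : realFieldType) (n : nat) (rI r0 v1 v2 wI wV : R)
    (l D Y : nat -> R) : Prop :=
  (forall i : nat, (1 <= i <= n)%N -> 0 <= D i /\ D i <= 2 * rI / v2 * wI) /\
  (forall k1 k2 : nat, (1 <= k1)%N -> (k1 <= k2)%N -> (k2 <= n)%N ->
     \sum_(k1 <= i < k2.+1) D i <=
       (\sum_(k1 <= i < k2) Num.min (l i) (2 * rI) + 2 * rI) / v2 * wI) /\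
  (forall i : nat, (1 <= i <= n)%N ->
     0 <= Y i /\ Y i <= 2 * r0 / (v1 + v2) * wV) /\
  (forall i : nat, (1 <= i <= n)%N -> Y i <= D i) /\
  (forall k1 k2 : nat, (1 <= k1)%N -> (k1 <= k2)%N -> (k2 <= n)%N ->
     \sum_(k1 <= i < k2.+1) Y i <=
       (\sum_(k1 <= i < k2) Num.min (l i) (2 * r0) + 2 * r0) / (v1 + v2) * wV).

Definition objective (R : realFieldType) (n : nat) (Y : nat -> R) : R :=
  \sum_(1 <= i < n.+1) Y i.

Definition Dstar (R : realFieldType) (n : nat) (rI v2 wI : R) (l : nat -> R)
    (i : nat) : R :=
  if (i < n)%N then Num.min (l i) (2 * rI) / v2 * wI else 2 * rI / v2 * wI.

Definition Ystar (R : realFieldType) (n : nat) (r0 v1 v2 wI wV : R)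
    (l : nat -> R) (i : nat) : R :=
  if (i < n)%N then Num.min (l i * wI / v2) (2 * r0 * wV / (v1 + v2))
  else 2 * r0 / (v1 + v2) * wV.

Definition lower_bound (R : realFieldType) (n : nat) (r0 v1 v2 wI wV : R)
    (l : nat -> R) : R :=
  \sum_(1 <= i < n) Num.min (l i / v2 * wI) (2 * r0 / (v1 + v2) * wV)
  + 2 * r0 / (v1 + v2) * wV.

From mathcomp Require Import all_boot all_order all_algebra.
From mathcomp Require Import ring.
Import Order.TTheory GRing.Theory Num.Theory.
Local Open Scope ring_scope.

(* With [sI = wI / v2] and [sV = wV / (v1 + v2)] the data obtainable per unit
   of road length from the infrastructure and over a vehicle link, the bounds
   on [wI] say exactly that [sI <= sV] and that a full vehicle contact,
   [2 r0 sV], carries less than a full infrastructure contact, [2 rI sI].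
   These two inequalities make every constraint of (P) hold term by term at
   the proposed point, whose objective value is the bound. *)

Lemma min_mul_le_mul_min (R : realDomainType) (x b a d c : R) :
  x * a <= x * d -> c <= b * d -> Num.min (x * a) c <= Num.min x b * d.
Proof.
move=> xad cbd; case: (leP x b) => _.
- by rewrite ge_min xad.
- by rewrite ge_min cbd orbT.
Qed.

Lemma ler_window_sum (R : numDomainType) (f g : nat -> R) (k1 k2 : nat)
    (b s : R) :
  (k1 <= k2)%N -> (forall i, (k1 <= i < k2)%N -> f i <= g i * s) ->
  f k2 <= b * s ->
  \sum_(k1 <= i < k2.+1) f i <= (\sum_(k1 <= i < k2) g i + b) * s.
Proof.
move=> k12 fg fb; rewrite big_nat_recr //= mulrDl mulr_suml.
by apply: lerD => //; apply: ler_sum_nat.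
Qed.

Section ProposedPoint.

Variables (R : realFieldType) (rI r0 v1 v2 wV wI : R) (n : nat) (l : nat -> R).
Hypotheses (r0_gt0 : 0 < r0) (r0_lt_rI : r0 < rI).
Hypotheses (v1_gt0 : 0 < v1) (v2_gt0 : 0 < v2) (wV_gt0 : 0 < wV).
Hypothesis wI_gt : r0 * wV * v2 / (rI * (v1 + v2)) < wI.
Hypothesis wI_lt : wI < wV * v2 / (v1 + v2).
Hypothesis l_ge0 : forall i : nat, (1 <= i <= n.-1)%N -> 0 <= l i.

Let sI := wI / v2.
Let sV := wV / (v1 + v2).

Let v12_gt0 : 0 < v1 + v2. Proof. by rewrite addr_gt0. Qed.
Let rI_gt0 : 0 < rI. Proof. exact: lt_trans r0_lt_rI. Qed.

Lemma sI_ge0 : 0 <= sI.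
Proof.
apply/ltW/divr_gt0 => //; apply: le_lt_trans wI_gt.
by apply/ltW/divr_gt0; apply: mulr_gt0 => //; apply: mulr_gt0.
Qed.

Lemma sV_ge0 : 0 <= sV.
Proof. exact/ltW/divr_gt0. Qed.

Lemma sI_le_sV : sI <= sV.
Proof. by rewrite /sI ler_pdivrMr // mulrAC ltW. Qed.

Lemma link_cap_lt : 2 * r0 * sV < 2 * rI * sI.
Proof.
rewrite -!mulrA ltr_pM2l // -(ltr_pM2r (mulr_gt0 v2_gt0 v12_gt0)).
have := wI_gt; rewrite ltr_pdivrMr ?mulr_gt0 //.
have -> : r0 * sV * (v2 * (v1 + v2)) = r0 * wV * v2.
  by rewrite /sV; field; rewrite gt_eqF.
suff -> : rI * sI * (v2 * (v1 + v2)) = wI * (rI * (v1 + v2)) by [].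
by rewrite /sI; field; rewrite gt_eqF.
Qed.

Lemma l_ge0_lt i : (1 <= i)%N -> (i < n)%N -> 0 <= l i.
Proof. by move=> i_ge1 i_lt; apply: l_ge0; rewrite i_ge1; case: (n) i_lt. Qed.

Lemma DstarE i : Dstar n rI v2 wI l i =
  (if (i < n)%N then Num.min (l i) (2 * rI) else 2 * rI) * sI.
Proof. by rewrite /Dstar; case: ifP => _; rewrite mulrAC -mulrA. Qed.

Lemma YstarE i : Ystar n r0 v1 v2 wI wV l i =
  if (i < n)%N then Num.min (l i * sI) (2 * r0 * sV) else 2 * r0 * sV.
Proof.
by rewrite /Ystar; case: ifP => _; [rewrite -!mulrA | rewrite mulrAC -mulrA].
Qed.

Lemma Dstar_ge0 i : (1 <= i)%N -> 0 <= Dstar n rI v2 wI l i.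
Proof.
move=> i_ge1; rewrite DstarE; apply: mulr_ge0 sI_ge0.
by case: ifP => [i_lt|_]; rewrite ?le_min ?l_ge0_lt //= ltW ?mulr_gt0.
Qed.

Lemma Dstar_le_cap i : Dstar n rI v2 wI l i <= 2 * rI * sI.
Proof.
rewrite DstarE; apply: (ler_wpM2r sI_ge0).
by case: ifP => _; rewrite ?ge_min lexx ?orbT.
Qed.

Lemma Ystar_ge0 i : (1 <= i)%N -> 0 <= Ystar n r0 v1 v2 wI wV l i.
Proof.
move=> i_ge1.
have c_ge0 : 0 <= 2 * r0 * sV by rewrite mulr_ge0 ?sV_ge0 // ltW ?mulr_gt0.
rewrite YstarE; case: ifP => [i_lt|_] //.
by rewrite le_min c_ge0 mulr_ge0 ?sI_ge0 ?l_ge0_lt.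
Qed.

Lemma Ystar_le_cap i : Ystar n r0 v1 v2 wI wV l i <= 2 * r0 * sV.
Proof. by rewrite YstarE; case: ifP => _; rewrite ?ge_min lexx ?orbT. Qed.

Lemma Ystar_le_Dstar i : Ystar n r0 v1 v2 wI wV l i <= Dstar n rI v2 wI l i.
Proof.
rewrite YstarE DstarE; case: ifP => _.
- exact/min_mul_le_mul_min/ltW/link_cap_lt.
- exact/ltW/link_cap_lt.
Qed.

Lemma Ystar_le_link i : (1 <= i)%N -> (i < n)%N ->
  Ystar n r0 v1 v2 wI wV l i <= Num.min (l i) (2 * r0) * sV.
Proof.
move=> i_ge1 i_lt; rewrite YstarE i_lt; apply: min_mul_le_mul_min => //.
by rewrite ler_wpM2l ?l_ge0_lt ?sI_le_sV.
Qed.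

Lemma feasible_star :
  feasible n rI r0 v1 v2 wI wV l (Dstar n rI v2 wI l) (Ystar n r0 v1 v2 wI wV l).
Proof.
split; [|split; [|split; [|split]]].
- move=> i /andP[i_ge1 _]; rewrite mulrAC -mulrA.
  by split; [apply: Dstar_ge0 | apply: Dstar_le_cap].
- move=> k1 k2 k1_ge1 k12 k2_le; rewrite mulrAC -mulrA.
  apply: ler_window_sum => // [i /andP[_ i_lt]|]; last exact: Dstar_le_cap.
  by rewrite DstarE (leq_trans i_lt k2_le).
- move=> i /andP[i_ge1 _]; rewrite mulrAC -mulrA.
  by split; [apply: Ystar_ge0 | apply: Ystar_le_cap].
- by move=> i _; apply: Ystar_le_Dstar.
- move=> k1 k2 k1_ge1 k12 k2_le; rewrite mulrAC -mulrA.
  apply: ler_window_sum => // [i /andP[i_ge1 i_lt]|]; last exact: Ystar_le_cap.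
  by rewrite Ystar_le_link ?(leq_trans k1_ge1 i_ge1) ?(leq_trans i_lt k2_le).
Qed.

End ProposedPoint.

Lemma objective_Ystar (R : realFieldType) (r0 v1 v2 wV wI : R) (n : nat)
    (l : nat -> R) :
  (1 <= n)%N ->
  objective n (Ystar n r0 v1 v2 wI wV l) = lower_bound n r0 v1 v2 wI wV l.
Proof.
case: n => // m _; rewrite /objective /lower_bound big_nat_recr //= /Ystar ltnn.
congr (_ + _); apply: eq_big_nat => i /andP[_ i_lt].
by rewrite i_lt mulrAC [2 * r0 * wV / _]mulrAC.
Qed.

Theorem theorem3 (R : realFieldType) (rI r0 v1 v2 wV wI : R) (n : nat)
    (l : nat -> R) :
  0 < r0 -> r0 < rI -> 0 < v1 -> 0 < v2 -> 0 < wV ->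
  r0 * wV * v2 / (rI * (v1 + v2)) < wI -> wI < wV * v2 / (v1 + v2) ->
  (1 <= n)%N ->
  (forall i : nat, (1 <= i <= n.-1)%N -> 0 <= l i) ->
  (* the optimal value of (P) is at least the bound: every upper bound of the
     objective over the feasible set dominates it *)
  (forall M : R,
     (forall D Y : nat -> R, feasible n rI r0 v1 v2 wI wV l D Y ->
        objective n Y <= M) ->
     lower_bound n r0 v1 v2 wI wV l <= M) /\
  (* the bound is attained by the feasible point (D^*, Y^* ) *)
  feasible n rI r0 v1 v2 wI wV l (Dstar n rI v2 wI l) (Ystar n r0 v1 v2 wI wV l) /\
  objective n (Ystar n r0 v1 v2 wI wV l) = lower_bound n r0 v1 v2 wI wV l.
Proof.
move=> r0_gt0 r0_lt_rI v1_gt0 v2_gt0 wV_gt0 wI_gt wI_lt n_ge1 l_ge0.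
split; last by split; [apply: feasible_star | apply: objective_Ystar].
move=> M ub; rewrite -objective_Ystar //; apply: ub; exact: feasible_star.
Qed.
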